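(* Let $d,K,n$ be positive integers with $K\ge 2$. For $\tau>0$ define $\mathcal L_0(\mathbf W,\mathbf H,\tau)=\tau\log\sum_{i=1}^n\sum_{k=1}^K\mathcal L_{\mathrm{CE}}(\mathbf W^\top\mathbf h_{k,i},\mathbf y_k,\tau)$, and let $\mathcal{WH}^-=\{(\mathbf W,\mathbf H)\in\mathrm{OB}(d,K)\times\mathrm{OB}(d,nK):(\mathbf w_{k'}-\mathbf w_k)^\top\mathbf h_{k,i}\le0\ \forall i\in[n],k\in[K],k'\in[K]\setminus\{k\}\}$. Then $\mathcal L_0(\cdot,\cdot,\tau)$ converges uniformly to $\mathcal L_{\mathrm{HardMax}}$ on $\mathcal{WH}^-$ as $\tau\to0$.
   Context: $\mathrm{OB}(d,m)$ is the set of real $d\times m$ matrices with unit-norm columns; $\mathbf W$ has columns $\mathbf w_k$, $\mathbf H$ has columns $\mathbf h_{k,i}$. $\mathbf y_k$ is the $k$-th standard basis vector of $\mathbb R^K$; $\mathcal L_{\mathrm{CE}}(\mathbf z,\mathbf y_k,\tau)=-\log\big(\exp(z_k/\tau)/\sum_{j=1}^K\exp(z_j/\tau)\big)$. $\mathcal L_{\mathrm{HardMax}}(\mathbf W,\mathbf H)=\max_k\max_i\max_{k'\ne k}\langle\mathbf w_{k'}-\mathbf w_k,\mathbf h_{k,i}\rangle$. *)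

From HB Require Import structures.
From mathcomp Require Import all_boot all_order all_algebra.
From mathcomp Require Import all_classical all_reals all_analysis.
Set Implicit Arguments. Unset Strict Implicit. Unset Printing Implicit Defensive.
Import Order.TTheory GRing.Theory Num.Theory.
Local Open Scope ring_scope.

Section Defs.
Variable R : realType.

Definition ip (d : nat) (u v : 'cV[R]_d) : R := \sum_(j < d) u j 0 * v j 0.

Definition OB (d m : nat) (M : 'M[R]_(d, m)) : Prop :=
  forall j : 'I_m, ip (col j M) (col j M) = 1.

Definition wcol (d K : nat) (W : 'M[R]_(d, K)) (k : 'I_K) : 'cV[R]_d := col k W.

Definition hcol (d K n : nat) (H : 'M[R]_(d, K * n)) (k : 'I_K) (i : 'I_n)
  : 'cV[R]_d := col (mxvec_index k i) H.

Definition L_CE (K : nat) (z : 'cV[R]_K) (k : 'I_K) (tau : R) : R :=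
  - ln (expR (z k 0 / tau) / \sum_(j < K) expR (z j 0 / tau)).

Definition L0 (d K n : nat) (W : 'M[R]_(d, K)) (H : 'M[R]_(d, K * n)) (tau : R)
  : R :=
  tau * ln (\sum_(i < n) \sum_(k < K) L_CE (W^T *m hcol H k i) k tau).

(* L_HardMax(W,H) = max_k max_i max_{k' <> k} < w_{k'} - w_k , h_{k,i} >,
   computed as a maximum in the extended reals (the index set is nonempty
   when K >= 2, n >= 1, so the maximum is finite) *)
Definition L_HardMax (d K n : nat) (W : 'M[R]_(d, K)) (H : 'M[R]_(d, K * n)) : R :=
  fine (\big[Order.max/-oo%E]_(k < K) \big[Order.max/-oo%E]_(i < n)
          \big[Order.max/-oo%E]_(k' < K | k' != k)
             (ip (wcol W k' - wcol W k) (hcol H k i))%:E).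

Definition WHminus (d K n : nat) (W : 'M[R]_(d, K)) (H : 'M[R]_(d, K * n)) : Prop :=
  OB W /\ OB H /\
  forall (i : 'I_n) (k k' : 'I_K), k' != k ->
    ip (wcol W k' - wcol W k) (hcol H k i) <= 0.

End Defs.

From HB Require Import structures.
From mathcomp Require Import all_boot all_order all_algebra.
From mathcomp Require Import all_classical all_reals all_analysis.
From mathcomp Require Import ring lra.
Import Order.TTheory GRing.Theory Num.Theory.
Local Open Scope ring_scope.

(* Write a_{k,i,k'} = <w_k' - w_k, h_{k,i}> and M for the largest of these
   margins, so that L_HardMax = M <= 0 on WH^-.  Each cross-entropy term is
   ln (1 + x_{k,i}) with x_{k,i} = sum_{k' <> k} exp (a_{k,i,k'} / tau), and
   exp (M / tau) <= x_{k,i} <= K exp (M / tau) at the maximising (k, i), while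
   x_{k,i} <= K exp (M / tau) <= K everywhere.  Using
   x / (1 + x) <= ln (1 + x) <= x, the sum S of the nK terms lies between
   exp (M / tau) / N and N exp (M / tau) with N = n K (K + 1), a constant
   independent of (W, H) and tau; hence |tau ln S - M| <= tau ln N. *)

Section Preliminaries.
Context {R : realType}.

Lemma L_CE_ln1D (K : nat) (z : 'cV[R]_K) (k : 'I_K) (tau : R) :
  L_CE z k tau = ln (1 + \sum_(j < K | j != k) expR ((z j 0 - z k 0) / tau)).
Proof.
have sum_gt0 : 0 < \sum_(j < K) expR (z j 0 / tau).
  rewrite (bigD1 k) //= ltr_pwDl ?expR_gt0 //.
  by apply: sumr_ge0 => j _; exact/ltW/expR_gt0.
have -> : 1 + \sum_(j < K | j != k) expR ((z j 0 - z k 0) / tau)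
    = (\sum_(j < K) expR (z j 0 / tau)) * expR (- (z k 0 / tau)).
  rewrite mulr_suml [RHS](bigD1 k) //= -expRD addrN expR0; congr (_ + _).
  by apply: eq_bigr => j _; rewrite -expRD mulrBl.
rewrite /L_CE ln_div ?posrE ?expR_gt0 // lnM ?posrE ?expR_gt0 // !expRK.
by rewrite opprB addrC.
Qed.

Lemma L_CE_ge0 (K : nat) (z : 'cV[R]_K) (k : 'I_K) (tau : R) : 0 <= L_CE z k tau.
Proof.
rewrite L_CE_ln1D ln_ge0 // lerDl.
by apply: sumr_ge0 => j _; exact/ltW/expR_gt0.
Qed.

Lemma ipBl (d : nat) (u v h : 'cV[R]_d) : ip (u - v) h = ip u h - ip v h.
Proof. by rewrite /ip -sumrB; apply: eq_bigr => j _; rewrite !mxE mulrBl. Qed.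

Lemma mulmx_trmx_ip (d K : nat) (W : 'M[R]_(d, K)) (h : 'cV[R]_d) (j : 'I_K) :
  (W^T *m h) j 0 = ip (wcol W j) h.
Proof. by rewrite /ip !mxE; apply: eq_bigr => l _; rewrite !mxE. Qed.

Lemma fine_bigmax3_attained {K n : nat} (F : 'I_K -> 'I_n -> 'I_K -> R) :
  (2 <= K)%N -> (0 < n)%N ->
  exists k0 i0 k0', k0' != k0 /\
   fine (\big[Order.max/-oo%E]_(k < K) \big[Order.max/-oo%E]_(i < n)
          \big[Order.max/-oo%E]_(k' < K | k' != k) (F k i k')%:E) = F k0 i0 k0'
   /\ forall k i k', k' != k -> F k i k' <= F k0 i0 k0'.
Proof.
case: K F => [|[|K]] F // _; case: n F => [|n] F // _.
set G2 := fun (k : 'I_K.+2) (i : 'I_n.+1) =>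
  \big[Order.max/-oo%E]_(k' < K.+2 | k' != k) (F k i k')%:E.
set G1 := fun k => \big[Order.max/-oo%E]_(i < n.+1) G2 k i.
have [k0 _ max_k0] := @eq_bigmax _ _ _ -oo%E ord0 xpredT G1 isT (fun _ _ => leNye _).
have [i0 _ max_i0] := @eq_bigmax _ _ _ -oo%E ord0 xpredT (G2 k0) isT (fun _ _ => leNye _).
have lift_neq : lift k0 ord0 != k0 by rewrite eq_sym neq_lift.
have [k0' k0'_neq max_k0'] := @eq_bigmax _ _ _ -oo%E (lift k0 ord0) (fun k' => k' != k0)
  (fun k' => (F k0 i0 k')%:E) lift_neq (fun _ _ => leNye _).
have top : \big[Order.max/-oo%E]_(k < K.+2) G1 k = (F k0 i0 k0')%:E.
  by rewrite max_k0 /G1 max_i0 /G2 max_k0'.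
exists k0, i0, k0'; split=> //; split; first by rewrite top.
move=> k i k' k'_neq; rewrite -lee_fin -top.
apply: le_trans (le_bigmax _ _ k); apply: le_trans (le_bigmax _ _ i).
exact: (le_bigmax_cond _ (fun k' => (F k i k')%:E) k'_neq).
Qed.

Lemma ln1D_ge_div (x : R) : 0 <= x -> x / (1 + x) <= ln (1 + x).
Proof.
move=> x_ge0; have x1_gt0 : 0 < 1 + x by rewrite ltr_pwDl.
have gtN1 : -1 < - (x / (1 + x)) by rewrite ltrN2 ltr_pdivrMr // mul1r; lra.
have := le_ln1Dx gtN1.
have -> : 1 - x / (1 + x) = (1 + x)^-1 by field; rewrite gt_eqF.
by rewrite lnV ?posrE // lerN2.
Qed.

Lemma scaled_ln_sandwich {S M tau N : R} : 0 < tau -> 0 < N ->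
  expR (M / tau) / N <= S -> S <= N * expR (M / tau) ->
  `|tau * ln S - M| <= tau * ln N.
Proof.
move=> tau_gt0 N_gt0 S_ge S_le.
have S_gt0 : 0 < S by apply: lt_le_trans S_ge; rewrite divr_gt0 ?expR_gt0.
have ln_le : ln S <= ln N + M / tau.
  by rewrite -(expRK (M / tau)) -lnM ?posrE ?expR_gt0 // ler_ln ?posrE ?mulr_gt0 ?expR_gt0.
have ln_ge : M / tau - ln N <= ln S.
  by rewrite -(expRK (M / tau)) -ln_div ?posrE ?expR_gt0 // ler_ln ?posrE ?divr_gt0 ?expR_gt0.
have tauK : tau * (M / tau) = M by rewrite mulrC divfK // gt_eqF.
rewrite ler_norml; apply/andP; split.
  by have := ler_wpM2l (ltW tau_gt0) ln_ge; rewrite mulrBr tauK; lra.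
by have := ler_wpM2l (ltW tau_gt0) ln_le; rewrite mulrDr tauK; lra.
Qed.

End Preliminaries.

Definition ce_ratio_bound (R : realType) (K n : nat) : R := (n * K * K.+1)%N%:R.

Lemma ce_ratio_bound_gt1 (R : realType) (K n : nat) :
  (2 <= K)%N -> (0 < n)%N -> 1 < ce_ratio_bound R K n.
Proof.
move=> K_ge2 n_gt0.
by rewrite /ce_ratio_bound ltr1n (@leq_trans (1 * 2 * 3)%N) // !leq_mul.
Qed.

Section Margins.
Context {R : realType} {d K n : nat} {W : 'M[R]_(d, K)} {H : 'M[R]_(d, K * n)}.
Hypotheses (K_ge2 : (2 <= K)%N) (n_gt0 : (0 < n)%N) (WH : WHminus W H).

Definition margin (k : 'I_K) (i : 'I_n) (k' : 'I_K) : R :=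
  ip (wcol W k' - wcol W k) (hcol H k i).

Lemma L_HardMax_attained :
  exists k0 i0 k0', k0' != k0 /\ L_HardMax W H = margin k0 i0 k0'.
Proof.
have [k0 [i0 [k0' [? [max_eq _]]]]] := fine_bigmax3_attained margin K_ge2 n_gt0.
by exists k0, i0, k0'; rewrite /L_HardMax max_eq.
Qed.

Lemma margin_le_L_HardMax k i k' : k' != k -> margin k i k' <= L_HardMax W H.
Proof.
have [k0 [i0 [k0' [_ [max_eq max_ub]]]]] := fine_bigmax3_attained margin K_ge2 n_gt0.
by rewrite /L_HardMax max_eq; apply: max_ub.
Qed.

Lemma L_HardMax_le0 : L_HardMax W H <= 0.
Proof.
have [k0 [i0 [k0' [k0'_neq ->]]]] := L_HardMax_attained.
by case: WH => _ [_ WH_le0]; apply: WH_le0.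
Qed.

Context {tau : R}.
Hypothesis tau_gt0 : 0 < tau.

Definition margin_tail (k : 'I_K) (i : 'I_n) : R :=
  \sum_(k' < K | k' != k) expR (margin k i k' / tau).

Lemma L_CE_margin_tail k i :
  L_CE (W^T *m hcol H k i) k tau = ln (1 + margin_tail k i).
Proof.
rewrite L_CE_ln1D; congr (ln (1 + _)); apply: eq_bigr => k' _.
by rewrite !mulmx_trmx_ip -ipBl.
Qed.

Lemma margin_tail_ge0 k i : 0 <= margin_tail k i.
Proof. by apply: sumr_ge0 => k' _; exact/ltW/expR_gt0. Qed.

Lemma margin_tail_le k i : margin_tail k i <= K%:R * expR (L_HardMax W H / tau).
Proof.
apply: (@le_trans _ _ (\sum_(k' < K | k' != k) expR (L_HardMax W H / tau))).
  apply: ler_sum => k' k'_neq.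
  by rewrite ler_expR ler_pM2r ?invr_gt0 //; exact: margin_le_L_HardMax.
rewrite sumr_const mulr_natl; apply: ler_wpMn2l; first exact: expR_ge0.
by rewrite -[X in (_ <= X)%N]card_ord max_card.
Qed.

Lemma expR_L_HardMax_le1 : expR (L_HardMax W H / tau) <= 1.
Proof. by rewrite expR_le1 pmulr_lle0 ?invr_gt0 ?L_HardMax_le0. Qed.

Let S := \sum_(i < n) \sum_(k < K) L_CE (W^T *m hcol H k i) k tau.
Let E := expR (L_HardMax W H / tau).

Lemma sum_L_CE_le : S <= ce_ratio_bound R K n * E.
Proof.
apply: (@le_trans _ _ (\sum_(i < n) \sum_(k < K) (K%:R * E))).
  apply: ler_sum => i _; apply: ler_sum => k _; rewrite L_CE_margin_tail.
  apply: le_trans (margin_tail_le k i).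
  by apply: le_ln1Dx; apply: lt_le_trans (margin_tail_ge0 k i); rewrite ltrN10.
rewrite !sumr_const !card_ord -mulrnA mulrnAl -mulrnA mul1r -mulr_natl.
rewrite ler_wpM2r ?expR_ge0 // ler_nat /ce_ratio_bound.
by rewrite mulnC [(n * K)%N]mulnC leq_mul2l leqnSn orbT.
Qed.

Lemma sum_L_CE_ge : E / ce_ratio_bound R K n <= S.
Proof.
have [k0 [i0 [k0' [k0'_neq max_eq]]]] := L_HardMax_attained.
have E_le_tail : E <= margin_tail k0 i0.
  rewrite /E max_eq /margin_tail (bigD1 k0') //= lerDl.
  by apply: sumr_ge0 => k' _; exact/ltW/expR_gt0.
have tail_le_K : margin_tail k0 i0 <= K%:R.
  apply: le_trans (margin_tail_le k0 i0) _.
  by rewrite -[leRHS]mulr1 ler_wpM2l ?ler0n ?expR_L_HardMax_le1.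
have K1_gt0 : 0 < K.+1%:R :> R by rewrite ltr0Sn.
apply: (@le_trans _ _ (margin_tail k0 i0 / K.+1%:R)).
  apply: ler_pM => //; [exact: ltW (expR_gt0 _) | by rewrite invr_ge0 ler0n |].
  have nK_gt0 : (0 < n * K)%N by rewrite muln_gt0 n_gt0 (ltn_trans _ K_ge2).
  have N_gt0 : (0 < n * K * K.+1)%N by rewrite muln_gt0 nK_gt0.
  by rewrite /ce_ratio_bound lef_pV2 ?posrE ?ltr0n ?N_gt0 // ler_nat leq_pmull.
apply: (@le_trans _ _ (ln (1 + margin_tail k0 i0))).
  apply: le_trans (ln1D_ge_div _ (margin_tail_ge0 k0 i0)).
  apply: ler_wpM2l; first exact: margin_tail_ge0.
  rewrite lef_pV2 ?posrE ?ltr_pwDl ?margin_tail_ge0 //.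
  by rewrite -natr1 [_ + 1]addrC lerD2l.
rewrite /S (bigD1 i0) //= (bigD1 k0) //= L_CE_margin_tail -addrA lerDl.
by rewrite addr_ge0 ?sumr_ge0 // => *; rewrite ?sumr_ge0 // => *; exact: L_CE_ge0.
Qed.

End Margins.

Theorem mainTheorem10 (R : realType) (d K n : nat) :
  (0 < d)%N -> (2 <= K)%N -> (0 < n)%N ->
  forall eps : R, 0 < eps ->
  exists delta : R, 0 < delta /\
    forall tau : R, 0 < tau -> tau < delta ->
    forall (W : 'M[R]_(d, K)) (H : 'M[R]_(d, K * n)),
      WHminus W H -> `|L0 W H tau - L_HardMax W H| < eps.
Proof.
move=> _ K_ge2 n_gt0 eps eps_gt0.
set N := ce_ratio_bound R K n.
have N_gt1 : 1 < N by exact: ce_ratio_bound_gt1.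
have lnN_gt0 : 0 < ln N by rewrite ln_gt0.
exists (eps / ln N); split; first by rewrite divr_gt0.
move=> tau tau_gt0 tau_lt W H WH; rewrite /L0.
have := scaled_ln_sandwich tau_gt0 (lt_trans ltr01 N_gt1)
  (sum_L_CE_ge K_ge2 n_gt0 WH tau_gt0) (sum_L_CE_le K_ge2 n_gt0 tau_gt0).
move/le_lt_trans; apply.
by move: tau_lt; rewrite ltr_pdivlMr.
Qed.
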